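(* Let $\mathfrak f=f_0x^2+f_1x+f_2\in\mathbb R[x,y]$ with $f_i\in\mathbb R[y]$ and $\deg(f_i)\le i$. Then there exists an algorithm which computes $\mathcal V_{\mathrm{aff}}(\mathfrak f)$.
   Context: For a set $\mathcal I$ of polynomials in $\mathbb R[x_1,\dots,x_d]$, $\mathcal V(\mathcal I)$ is its common real zero set, and $\mathcal V_{\mathrm{aff}}(\mathcal I)$ (the isolated affine subspaces) is the set of all affine subspaces $\mathcal C\subset\mathcal V(\mathcal I)$ which are not properly contained in a connected component of $\mathcal V(\mathcal I)$, i.e., the connected components of $\mathcal V(\mathcal I)$ that are affine subspaces. Algorithms operate exactly on real numbers with real root finding of univariate polynomials as a primitive. *)

From HB Require Import structures.
From mathcomp Require Import all_boot all_order all_algebra.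
From mathcomp Require Import all_classical all_reals all_analysis.
Set Implicit Arguments.
Unset Strict Implicit.
Unset Printing Implicit Defensive.
Import Order.TTheory GRing.Theory Num.Theory.
Local Open Scope classical_set_scope.
Local Open Scope ring_scope.
Import numFieldNormedType.Exports.

(* Geometry in the plane R^2 (modelled as R * R with the product topology,  *)
(* i.e. the Euclidean topology).                                            *)

Definition feval (R : realType) (f0 f1 f2 : {poly R}) (z : R * R) : R :=
  f0.[z.2] * z.1 ^+ 2 + f1.[z.2] * z.1 + f2.[z.2].

Definition zeroset (R : realType) (f0 f1 f2 : {poly R}) : set (R * R) :=
  [set z | feval f0 f1 f2 z = 0].

Definition affine_subspace (R : realType) (C : set (R * R)) : Prop :=
  C !=set0 /\
  forall a b : R * R, C a -> C b -> forall t : R,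
    C ((1 - t) * a.1 + t * b.1, (1 - t) * a.2 + t * b.2).

Definition Vaff (R : realType) (V : set (R * R)) : set (set (R * R)) :=
  [set C | affine_subspace C /\ C `<=` V /\
           ~ (exists x, V x /\ C `<` @connected_component (R * R)%type V x)].

(* A model of algorithms computing exactly with real numbers (BSS-style      *)
(* register machine over R) with real root finding of univariate            *)
(* polynomials as a primitive, and an output instruction emitting a         *)
(* description (point + spanning vectors) of an affine subspace of R^2.     *)

Inductive instr (R : Type) : Type :=
  | IConst of nat & R
  | IAdd of nat & nat & nat
  | ISub of nat & nat & nat
  | IMul of nat & nat & nat
  | IDiv of nat & nat & nat        (* reg d := reg a / reg b  (x/0 = 0)    *)
  | IJmp of nat
  | IJlt of nat & nat
  | IJeq of nat & nat
  | IRoots of nat & nat & nat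
      (* IRoots d s n : let p = \sum_(i <= n) reg (s+i) X^i.
         If p = 0 then reg d := -1, otherwise reg d := k, the number of
         distinct real roots of p, and reg (d+1), ..., reg (d+k) := these
         roots in increasing order. *)
  | IEmit of nat & nat.

Definition program (R : Type) := seq (instr R).

(* An emitted description: base point and list of direction vectors. *)
Definition descr (R : Type) := ((R * R) * seq (R * R))%type.

Record mstate (R : Type) := MState {
  ms_pc : nat;
  ms_reg : nat -> R;
  ms_out : seq (descr R) }.

Definition upd (R : Type) (reg : nat -> R) (d : nat) (v : R) : nat -> R :=
  fun i => if i == d then v else reg i.

Definition poly_of_regs (R : realType) (reg : nat -> R) (s n : nat) : {poly R} :=
  \poly_(i < n.+1) reg (s + i)%N.

Definition roots_result (R : realType) (reg reg' : nat -> R) (d s n : nat) : Prop :=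
  let p := poly_of_regs reg s n in
  if p == 0 then reg' = upd reg d (-1)
  else exists rs : seq R,
      sorted <%R rs /\ (forall x, x \in rs = root p x) /\
      reg' = (fun i => if i == d then (size rs)%:R
                       else if (d < i <= d + size rs)%N
                            then nth 0 rs (i - d.+1)%N
                            else reg i).

Definition emit_descr (R : realType) (reg : nat -> R) (k r : nat) : descr R :=
  ((reg r, reg r.+1),
   [seq (reg (r + 2 + 2 * i)%N, reg (r + 3 + 2 * i)%N) | i <- iota 0 k]).

Inductive step (R : realType) (P : program R) : mstate R -> mstate R -> Prop :=
  | StConst pc reg out d c :
      nth (IJmp R pc) P pc = IConst d c -> (pc < size P)%N ->
      step P (MState pc reg out) (MState pc.+1 (upd reg d c) out)
  | StAdd pc reg out d a b :
      nth (IJmp R pc) P pc = IAdd R d a b -> (pc < size P)%N ->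
      step P (MState pc reg out) (MState pc.+1 (upd reg d (reg a + reg b)) out)
  | StSub pc reg out d a b :
      nth (IJmp R pc) P pc = ISub R d a b -> (pc < size P)%N ->
      step P (MState pc reg out) (MState pc.+1 (upd reg d (reg a - reg b)) out)
  | StMul pc reg out d a b :
      nth (IJmp R pc) P pc = IMul R d a b -> (pc < size P)%N ->
      step P (MState pc reg out) (MState pc.+1 (upd reg d (reg a * reg b)) out)
  | StDiv pc reg out d a b :
      nth (IJmp R pc) P pc = IDiv R d a b -> (pc < size P)%N ->
      step P (MState pc reg out) (MState pc.+1 (upd reg d (reg a / reg b)) out)
  | StJmp pc reg out l :
      nth (IJmp R pc) P pc = IJmp R l -> (pc < size P)%N ->
      step P (MState pc reg out) (MState l reg out)
  | StJlt pc reg out a l :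
      nth (IJmp R pc) P pc = IJlt R a l -> (pc < size P)%N ->
      step P (MState pc reg out) (MState (if reg a < 0 then l else pc.+1) reg out)
  | StJeq pc reg out a l :
      nth (IJmp R pc) P pc = IJeq R a l -> (pc < size P)%N ->
      step P (MState pc reg out) (MState (if reg a == 0 then l else pc.+1) reg out)
  | StRoots pc reg reg' out d s n :
      nth (IJmp R pc) P pc = IRoots R d s n -> (pc < size P)%N ->
      roots_result reg reg' d s n ->
      step P (MState pc reg out) (MState pc.+1 reg' out)
  | StEmit pc reg out k r :
      nth (IJmp R pc) P pc = IEmit R k r -> (pc < size P)%N ->
      step P (MState pc reg out) (MState pc.+1 reg (rcons out (emit_descr reg k r))).

Inductive reach (R : realType) (P : program R) : mstate R -> mstate R -> Prop :=
  | reach_refl s : reach P s s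
  | reach_step s1 s2 s3 : step P s1 s2 -> reach P s2 s3 -> reach P s1 s3.

Definition init_state (R : realType) (f0 f1 f2 : {poly R}) : mstate R :=
  MState 0 (fun i => nth 0 [:: f0`_0; f1`_0; f1`_1; f2`_0; f2`_1; f2`_2] i) [::].

Definition halted (R : realType) (P : program R) (s : mstate R) : Prop :=
  (size P <= ms_pc s)%N.

Definition descr_set (R : realType) (e : descr R) : set (R * R) :=
  [set z | exists t : seq R, size t = size e.2 /\
     z = (e.1.1 + \sum_(i < size e.2) t`_i * (e.2`_i).1,
          e.1.2 + \sum_(i < size e.2) t`_i * (e.2`_i).2)].

Definition output_family (R : realType) (out : seq (descr R)) : set (set (R * R)) :=
  [set C | exists2 e, e \in out & C = descr_set e].

Definition computes_Vaff (R : realType) (P : program R) : Prop :=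
  forall f0 f1 f2 : {poly R},
    (size f0 <= 1)%N -> (size f1 <= 2)%N -> (size f2 <= 3)%N ->
    (exists s, reach P (init_state f0 f1 f2) s /\ halted P s) /\
    (forall s, reach P (init_state f0 f1 f2) s -> halted P s ->
       output_family (ms_out s) = Vaff (zeroset f0 f1 f2)).

(* Write f = a x^2 + b x y + c y^2 + d x + e y + g, a plane conic.  An isolated affine
   subspace C of V = V(f) contains every connected subset of V that meets it.
   If the determinant of the conic is nonzero, every point of V is smooth, so an arc of V
   leaves each point of C; then C contains a segment, hence a line of V, and a line inside
   V forces the determinant to vanish: V_aff is empty.  Otherwise the conic is degenerate
   and V is empty, a point, the plane, a line, two crossing lines (connected but not
   affine, so V_aff is empty) or a union of parallel lines phi = u, u running over the real
   roots of a univariate quadratic; these lines are then the components.  A fixed program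
   distinguishes these cases by exact sign tests, finds the roots with the root-finding
   instruction, and emits the answer; as the machine is deterministic, every halting run
   produces it. *)

From mathcomp Require Import all_boot all_order all_algebra.
From mathcomp Require Import all_classical all_reals all_analysis.
From mathcomp Require Import polyrcf.
From mathcomp Require Import ring lra zify.

Set Implicit Arguments.
Unset Strict Implicit.
Unset Printing Implicit Defensive.
Import Order.TTheory GRing.Theory Num.Theory.
Local Open Scope classical_set_scope.
Local Open Scope ring_scope.
Import numFieldNormedType.Exports.

(** * Isolated affine subspaces *)

Section IsolatedAffine.
Variable R : realType.
Implicit Types (C D V : set (R * R)) (p q z : R * R).

Lemma eq_of_diff_mul0 (k L M E : R) : E = 0 -> L - M = k * E -> L = M.
Proof. by move=> ->; rewrite mulr0 => /eqP; rewrite subr_eq0 => /eqP. Qed.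

Definition affine_comb p q (t : R) : R * R :=
  ((1 - t) * p.1 + t * q.1, (1 - t) * p.2 + t * q.2).

Lemma continuous_affine (k l : R) : continuous (fun t : R => k + t * l).
Proof.
move=> t; apply: cvgD; first exact: cvg_cst.
by apply: cvgM; [exact: cvg_id | exact: cvg_cst].
Qed.

Lemma continuous_pair (T : topologicalType) (f g : T -> R) t :
  {for t, continuous f} -> {for t, continuous g} ->
  {for t, continuous (fun x => (f x, g x))}.
Proof. exact: cvg_pair. Qed.

Lemma continuous_line (p v : R * R) :
  continuous (fun t : R => (p.1 + t * v.1, p.2 + t * v.2)).
Proof.
by move=> t; apply: (@continuous_pair R (fun t => p.1 + t * v.1) (fun t => p.2 + t * v.2));
  exact: continuous_affine.
Qed.

Lemma affine_combE p q t :
  affine_comb p q t = (p.1 + t * (q.1 - p.1), p.2 + t * (q.2 - p.2)).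
Proof. by rewrite /affine_comb; congr pair; ring. Qed.

Lemma connected_image_interval (T : topologicalType) (h : R -> T) (S : set R) :
  is_interval S -> (forall y, S y -> {for y, continuous h}) -> connected (h @` S).
Proof.
move=> iS hc; apply: connected_continuous_connected; first exact/connected_intervalP.
rewrite continuous_subspace_in => y; rewrite inE => Sy.
exact/continuous_subspaceT_for/hc.
Qed.

Lemma connected_range_line (p v : R * R) :
  connected (range (fun t : R => (p.1 + t * v.1, p.2 + t * v.2))).
Proof. by apply: connected_image_interval => // t _; exact: continuous_line. Qed.

Lemma affine_subspace_connected C : affine_subspace C -> connected C.
Proof.
move=> [[c Cc] Caff].
have -> : C = \bigcup_(q in C) range (affine_comb c q).
  apply/seteqP; split=> [z Cz|z [q Cq [t _ <-]]]; last exact: Caff.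
  exists z => //; exists 1 => //.
  by rewrite /affine_comb; case: z {Cz} => x y /=; congr pair; ring.
apply: bigcup_connected.
  exists c => q Cq; exists 0 => //.
  by rewrite /affine_comb; case: c {Cc} => x y /=; congr pair; ring.
move=> q Cq; set v := (q.1 - c.1, q.2 - c.2).
have -> : affine_comb c q = (fun t => (c.1 + t * v.1, c.2 + t * v.2)).
  by apply: funext => t; rewrite affine_combE.
exact: connected_range_line.
Qed.

Lemma Vaff_absorb V C D : Vaff V C -> connected D -> D `<=` V ->
  (exists z, D z /\ C z) -> D `<=` C.
Proof.
move=> [Caff [CV Cn]] cD DV [z [Dz Cz]].
apply: contrapT => nDC; apply: Cn; exists z; split; first exact: CV.
split; first exact/connected_component_max/affine_subspace_connected.
move=> compC; apply: nDC => w Dw; apply: compC.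
exact: (connected_component_max Dz DV cD).
Qed.

Lemma VaffI V C : affine_subspace C -> C `<=` V ->
  (forall D, connected D -> D `<=` V -> (exists z, D z /\ C z) -> D `<=` C) ->
  Vaff V C.
Proof.
move=> Caff CV absorb; split => //; split => //.
move=> [x [Vx [Cx nCx]]]; apply: nCx; apply: absorb.
- exact: component_connected.
- exact: connected_component_sub.
- by case: Caff => [[c Cc] _]; exists c; split => //; apply: Cx.
Qed.

Lemma Vaff_connected V : connected V ->
  Vaff V = [set C | C = V /\ affine_subspace V].
Proof.
move=> cV; apply/seteqP; split => C; last first.
  by move=> [-> Va]; apply: VaffI.
move=> VaffC; have [Caff [CV _]] := VaffC.
have VC : V `<=` C.
  apply: (Vaff_absorb VaffC) => //.
  by case: Caff => [[c Cc] _]; exists c; split => //; apply: CV.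
have CVE : C = V by apply/seteqP; split.
by rewrite -CVE.
Qed.

Lemma affine_subspaceT : affine_subspace (@setT (R * R)).
Proof. by split => //; exists (0, 0). Qed.

Lemma affine_subspace1 z : affine_subspace [set z].
Proof.
split; first by exists z.
by move=> a b /= -> -> t; case: z => x y /=; congr pair; ring.
Qed.

Lemma VaffT : Vaff (@setT (R * R)) = [set setT].
Proof.
rewrite Vaff_connected; last exact/affine_subspace_connected/affine_subspaceT.
apply/seteqP; split => C /=; first by case.
by move=> ->; split => //; exact: affine_subspaceT.
Qed.

Lemma Vaff0 : Vaff (@set0 (R * R)) = set0.
Proof.
rewrite Vaff_connected; last exact: connected0.
by apply/seteqP; split => C //= [_ [[z]]].
Qed.

Lemma Vaff1 z : Vaff [set z] = [set [set z]].
Proof.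
rewrite Vaff_connected; last exact: connected1.
apply/seteqP; split => C /=; first by case.
by move=> ->; split => //; exact: affine_subspace1.
Qed.

End IsolatedAffine.

(** * Level sets of a linear form *)

Section LevelSets.
Variable R : realType.
Implicit Types (C D : set (R * R)) (S : set R).

Definition interval_free S :=
  forall u u', S u -> S u' -> u < u' -> exists2 w, u < w < u' & ~ S w.

Definition level_line (al be u : R) : set (R * R) := [set z | al * z.1 + be * z.2 = u].

Lemma continuous_linear_form (al be : R) :
  continuous (fun z : R * R => al * z.1 + be * z.2).
Proof.
by move=> z; apply: cvgD; apply: cvgM; (exact: cvg_cst || exact: cvg_fst || exact: cvg_snd).
Qed.

(* phi maps D onto an interval contained in S, and such an interval is a point. *)
Lemma linear_form_constant (al be : R) S D : interval_free S -> connected D ->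
  (forall z, D z -> S (al * z.1 + be * z.2)) ->
  forall z1 z2, D z1 -> D z2 -> al * z1.1 + be * z1.2 = al * z2.1 + be * z2.2.
Proof.
move=> freeS cD DS.
set phi := fun z : R * R => al * z.1 + be * z.2.
have /connected_intervalP iD : connected (phi @` D).
  exact/connected_continuous_connected/continuous_subspaceT/continuous_linear_form.
have not_lt z1 z2 : D z1 -> D z2 -> ~ phi z1 < phi z2.
  move=> D1 D2 lt12; have [w /andP[w1 w2] nSw] := freeS _ _ (DS _ D1) (DS _ D2) lt12.
  have [z Dz zw] : (phi @` D) w by apply: (iD (phi z1) (phi z2)); rewrite ?(ltW w1) ?(ltW w2).
  by apply: nSw; rewrite -zw; apply: DS.
move=> z1 z2 D1 D2; apply/eqP; rewrite eq_le !leNgt.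
by apply/andP; split; apply/negP; [exact: (not_lt z2 z1) | exact: (not_lt z1 z2)].
Qed.

Lemma level_line_affine (al be u : R) : (al != 0) || (be != 0) ->
  affine_subspace (level_line al be u).
Proof.
move=> nz; have n0 : al ^+ 2 + be ^+ 2 != 0.
  by rewrite paddr_eq0 ?sqr_ge0 // !sqrf_eq0 negb_and.
split.
  exists (u * al / (al ^+ 2 + be ^+ 2), u * be / (al ^+ 2 + be ^+ 2)).
  by rewrite /level_line /=; field.
move=> p q /= hp hq t; rewrite /level_line /= in hp hq *.
rewrite -[u](_ : (1 - t) * u + t * u = u); last by ring.
by rewrite -{1}hp -hq; ring.
Qed.

Lemma Vaff_level_sets (al be : R) S : (al != 0) || (be != 0) -> interval_free S ->
  Vaff [set z | S (al * z.1 + be * z.2)] = [set C | exists2 u, S u & C = level_line al be u].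
Proof.
move=> nz freeS; apply/seteqP; split => C.
  move=> VaffC; have [Caff [CV _]] := VaffC; have [[c Cc] _] := Caff.
  exists (al * c.1 + be * c.2); first exact: CV.
  apply/seteqP; split => z.
    move=> Cz; rewrite /level_line /=.
    by apply: (linear_form_constant freeS (affine_subspace_connected Caff)) => // w /CV.
  apply: (Vaff_absorb VaffC) => [|w /= ->|]; last by exists c.
    exact/affine_subspace_connected/level_line_affine.
  exact: CV.
move=> [u Su ->]; apply: VaffI => [|z /= ->//|D cD DV [z [Dz Lz]] w Dw].
  exact: level_line_affine.
by rewrite /level_line /= -Lz; apply: (linear_form_constant freeS cD DV).
Qed.

(* A nonzero polynomial vanishing on ]u, u'[ would have the infinitely many roots
   u + (u' - u) / (i + 2). *)
Lemma root_interval_free (p : {poly R}) : p != 0 -> interval_free (root p).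
Proof.
move=> pn u u' ru ru' uu'; apply: contrapT => allroot.
have inside_root w : u < w < u' -> root p w.
  by move=> hw; apply: contrapT => nr; apply: allroot; exists w.
have du : 0 < u' - u by rewrite subr_gt0.
set f := fun i : nat => u + (u' - u) / (i.+2)%:R.
have f_in i : u < f i < u'.
  have h1 : 0 < (u' - u) / (i.+2)%:R by rewrite divr_gt0 ?ltr0n.
  have h2 : (u' - u) / (i.+2)%:R < u' - u.
    by rewrite ltr_pdivrMr ?ltr0n // ltr_pMr // ltr1n.
  by rewrite /f; move: h1 h2; set q := _ / _ => h1 h2; apply/andP; split; lra.
have f_inj : injective f.
  move=> i j /addrI /(congr1 (fun x => (u' - u)^-1 * x)).
  by rewrite !mulKf ?gt_eqF // => /invr_inj/eqP; rewrite eqr_nat => /eqP [].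
have all_root : all (root p) (map f (iota 0 (size p))).
  by apply/allP => x /mapP [i _ ->]; apply: inside_root.
have := max_poly_roots pn all_root.
by rewrite map_inj_uniq ?iota_uniq // size_map size_iota ltnn => /(_ isT).
Qed.

Lemma quadratic_roots_interval_free (k2 k1 k0 : R) : k2 != 0 ->
  interval_free (fun u => k2 * u ^+ 2 + k1 * u + k0 = 0).
Proof.
move=> k2n; set p := k2 *: 'X^2 + k1 *: 'X + k0%:P.
have pn : p != 0.
  apply/eqP => p0; have : p`_2 = k2.
    by rewrite /p !coefD !coefZ !coefXn coefX coefC /= mulr1 !mulr0 !addr0.
  by rewrite p0 coef0 => /esym/eqP; rewrite (negbTE k2n).
have pE u : (k2 * u ^+ 2 + k1 * u + k0 = 0) = root p u.
  by apply/propext; rewrite /root /p !hornerE; split => [->|/eqP].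
have -> : (fun u => k2 * u ^+ 2 + k1 * u + k0 = 0) = root p by apply: funext.
exact: root_interval_free.
Qed.

End LevelSets.

(** * Conics and their smooth points *)

Section Conics.
Variable R : realType.
Implicit Types (a b c d e g : R) (z p v : R * R) (P : set (R * R)).

Definition conic a b c d e g z : R :=
  a * z.1 ^+ 2 + b * z.1 * z.2 + c * z.2 ^+ 2 + d * z.1 + e * z.2 + g.

Definition qform a b c v : R := a * v.1 ^+ 2 + b * v.1 * v.2 + c * v.2 ^+ 2.

Definition conic_dx a b d z : R := 2 * a * z.1 + b * z.2 + d.
Definition conic_dy b c e z : R := b * z.1 + 2 * c * z.2 + e.

(* Four times the determinant of [[a, b/2, d/2]; [b/2, c, e/2]; [d/2, e/2, g]]. *)
Definition conic_det a b c d e g : R :=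
  4 * a * c * g + b * d * e - a * e ^+ 2 - c * d ^+ 2 - b ^+ 2 * g.

Definition arc_in P z0 :=
  exists D, [/\ connected D, D `<=` P, D z0 & exists2 z1, D z1 & z1 <> z0].

Lemma continuous_quadratic (k0 k1 k2 : R) :
  continuous (fun y : R => k0 + k1 * y + k2 * y ^+ 2).
Proof.
have -> : (fun y : R => k0 + k1 * y + k2 * y ^+ 2) = horner (k0%:P + k1 *: 'X + k2 *: 'X ^+ 2).
  by apply: funext => y; rewrite !hornerE.
exact: continuous_horner.
Qed.

(* The graph of h over a small interval around y0 on which w stays positive. *)
Lemma arc_in_graph P (h w : R -> R) y0 :
  {for y0, continuous w} -> 0 < w y0 ->
  (forall y, 0 < w y -> {for y, continuous h} /\ P (h y, y)) -> arc_in P (h y0, y0).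
Proof.
move=> cw wy0 hP.
have /nbhs_ballP [eps /= eps0 epsw] : \forall t \near y0, 0 < w t.
  exact: (@cvgr_gt R _ (nbhs y0) _ w (w y0) cw 0 wy0).
set I := [set y | y0 - eps / 2 <= y <= y0 + eps / 2].
have eps20 : 0 < eps / 2 by rewrite divr_gt0.
have Iw y : I y -> 0 < w y.
  move=> /andP [y1 y2]; apply: epsw; rewrite /ball /= ltr_distlC.
  by apply/andP; split; lra.
have Iy0 : I (y0 + eps / 2) by rewrite /I /=; apply/andP; split; lra.
exists ((fun y => (h y, y)) @` I); split.
- apply: connected_image_interval.
    by move=> u v /= /andP[u1 u2] /andP[v1 v2] t /andP[ut tv]; apply/andP; split; lra.
  by move=> y /Iw /hP [hc _]; exact: (@continuous_pair R R h id y hc cvg_id).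
- by move=> z [y /Iw /hP [_ Py] <-].
- by exists y0 => //; rewrite /I /=; apply/andP; split; lra.
- exists (h (y0 + eps / 2), y0 + eps / 2); first by exists (y0 + eps / 2).
  by case=> _ /eqP; rewrite -subr_eq0 addrAC subrr add0r gt_eqF.
Qed.

(* Without x^2 term, V is locally the graph of x = - (g + e y + c y^2) / (d + b y). *)
Lemma conic_arc_dx_a0 b c d e g z0 :
  conic 0 b c d e g z0 = 0 -> conic_dx 0 b d z0 != 0 ->
  arc_in [set z | conic 0 b c d e g z = 0] z0.
Proof.
case: z0 => x0 y0; rewrite /conic /conic_dx /= => F0 dx0.
have lin_neq0 y : 0 < (d + y * b) ^+ 2 -> d + y * b != 0.
  by rewrite -sqrf_eq0 => /lt0r_neq0.
have lin0 : d + y0 * b != 0 by rewrite (_ : _ + _ = 2 * 0 * x0 + b * y0 + d) //; ring.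
set h := fun y => - (g + e * y + c * y ^+ 2) / (d + y * b).
have hx0 : h y0 = x0.
  rewrite /h; apply: (mulIf lin0); rewrite divfK //.
  by apply: (eq_of_diff_mul0 (k := -1) F0); ring.
rewrite -hx0; apply: (arc_in_graph (w := fun y => (d + y * b) ^+ 2)).
- have -> : (fun y : R => (d + y * b) ^+ 2) =
      (fun y => d ^+ 2 + (2 * d * b) * y + b ^+ 2 * y ^+ 2) by apply: funext => y; ring.
  exact: continuous_quadratic.
- by rewrite lt0r sqr_ge0 andbT sqrf_eq0.
move=> y /lin_neq0 lin; split; last by rewrite /h /=; field.
apply: continuousM; first exact/continuousN/continuous_quadratic.
exact/continuousV/continuous_affine.
Qed.

(* With a != 0, V is locally the graph of x = (- (d + b y) + s sqrt(disc y)) / (2 a),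
   where s is the sign of the x-derivative at z0. *)
Lemma conic_arc_dx_a_neq0 a b c d e g z0 : a != 0 ->
  conic a b c d e g z0 = 0 -> conic_dx a b d z0 != 0 ->
  arc_in [set z | conic a b c d e g z = 0] z0.
Proof.
case: z0 => x0 y0 an0; rewrite /conic /conic_dx /= => F0 dx0.
set disc := fun y : R => (d ^+ 2 - 4 * a * g) + (2 * b * d - 4 * a * e) * y
                         + (b ^+ 2 - 4 * a * c) * y ^+ 2.
set s := 2 * a * x0 + b * y0 + d in dx0.
have disc0 : disc y0 = s ^+ 2.
  by apply: (eq_of_diff_mul0 (k := - 4 * a) F0); rewrite /disc /s; ring.
have sg2 : Num.sg s ^+ 2 = 1 by rewrite sqr_sg dx0.
set h := fun y : R => (- (d + y * b) + Num.sg s * Num.sqrt (disc y)) / (2 * a).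
have hx0 : h y0 = x0.
  by rewrite /h disc0 sqrtr_sqr mulr_sg_norm /s; field.
rewrite -hx0; apply: (arc_in_graph (w := disc)); first exact: continuous_quadratic.
  by rewrite disc0 lt0r sqr_ge0 andbT sqrf_eq0.
move=> y disc_pos; split.
  apply: continuousM; last exact: cvg_cst.
  apply: continuousD; first exact/continuousN/continuous_affine.
  apply: continuousM; first exact: cvg_cst.
  by apply: continuous_comp; [exact: continuous_quadratic | exact: sqrt_continuous].
have r2 : Num.sqrt (disc y) ^+ 2 = disc y by rewrite sqr_sqrtr // ltW.
rewrite /h /=; move: r2; set r := Num.sqrt (disc y) => r2.
apply: (eq_of_diff_mul0 (k := (4 * a)^-1) (_ : Num.sg s ^+ 2 * r ^+ 2 - disc y = 0)).
  by rewrite sg2 mul1r r2 subrr.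
by rewrite /disc; field.
Qed.

Definition swap_xy z : R * R := (z.2, z.1).

Lemma swap_xyK : involutive swap_xy. Proof. by case. Qed.

Lemma continuous_swap_xy : continuous swap_xy.
Proof.
move=> z; exact: (@continuous_pair R (R * R)%type (fun z : R * R => z.2) (fun z => z.1) z
  cvg_snd cvg_fst).
Qed.

Lemma conic_swap_xy a b c d e g z :
  conic a b c d e g (swap_xy z) = conic c b a e d g z.
Proof. by rewrite /conic /swap_xy /=; ring. Qed.

Lemma conic_arc_smooth a b c d e g z0 : conic a b c d e g z0 = 0 ->
  conic_dx a b d z0 != 0 \/ conic_dy b c e z0 != 0 ->
  arc_in [set z | conic a b c d e g z = 0] z0.
Proof.
move=> F0; have arc_dx a' b' c' d' e' g' z : conic a' b' c' d' e' g' z = 0 ->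
    conic_dx a' b' d' z != 0 -> arc_in [set z | conic a' b' c' d' e' g' z = 0] z.
  have [->|an0] := eqVneq a' 0; [exact: conic_arc_dx_a0 | exact: conic_arc_dx_a_neq0].
case=> [dx0|dy0]; first exact: arc_dx.
have F0' : conic c b a e d g (swap_xy z0) = 0 by rewrite -conic_swap_xy; case: z0 F0 {dy0}.
have dx0' : conic_dx c b e (swap_xy z0) != 0.
  by rewrite /conic_dx /swap_xy /= [2 * c * _ + _]addrC.
have [D [cD DV Dz [z1 Dz1 z1n]]] := arc_dx _ _ _ _ _ _ _ F0' dx0'.
exists (swap_xy @` D); split.
- exact/connected_continuous_connected/continuous_subspaceT/continuous_swap_xy.
- by move=> z [w Dw <-]; rewrite /= conic_swap_xy; apply: DV.
- by exists (swap_xy z0); rewrite ?swap_xyK.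
- exists (swap_xy z1); first by exists z1.
  by move=> z1E; apply: z1n; rewrite -z1E swap_xyK.
Qed.

Lemma conic_affine_comb a b c d e g p q t :
  conic a b c d e g (affine_comb p q t) = conic a b c d e g p +
    t * (conic_dx a b d p * (q.1 - p.1) + conic_dy b c e p * (q.2 - p.2)) +
    t ^+ 2 * qform a b c (q.1 - p.1, q.2 - p.2).
Proof. by rewrite /conic /affine_comb /conic_dx /conic_dy /qform /=; ring. Qed.

Lemma conic_det_singular a b c d e g p : conic a b c d e g p = 0 ->
  conic_dx a b d p = 0 -> conic_dy b c e p = 0 -> conic_det a b c d e g = 0.
Proof.
move=> F0 X0 Y0; have -> : conic_det a b c d e g =
   (b * e - 2 * c * d) / 2 * conic_dx a b d p + (b * d - 2 * a * e) / 2 * conic_dy b c e p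
   + (4 * a * c - b ^+ 2) *
     (conic a b c d e g p - p.1 / 2 * conic_dx a b d p - p.2 / 2 * conic_dy b c e p).
  by rewrite /conic_det /conic /conic_dx /conic_dy; field.
by rewrite F0 X0 Y0; ring.
Qed.

(* The determinant is invariant under translation to p, where the conic has
   linear part (dx, dy) and constant term 0. *)
Lemma conic_det_line a b c d e g p v : conic a b c d e g p = 0 ->
  conic_dx a b d p * v.1 + conic_dy b c e p * v.2 = 0 -> qform a b c v = 0 ->
  conic_det a b c d e g = 0 \/ v = (0, 0).
Proof.
move=> F0 L0 Q0.
have -> : conic_det a b c d e g =
    conic_det a b c (conic_dx a b d p) (conic_dy b c e p) (conic a b c d e g p).
  by rewrite /conic_det /conic_dx /conic_dy /conic; ring.
rewrite F0; move: L0; set d' := conic_dx a b d p; set e' := conic_dy b c e p => L0.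
set D := conic_det a b c d' e' 0.
have D1 : D * v.1 ^+ 2 = 0.
  rewrite (_ : D * _ = (d' * v.1 + e' * v.2) * (c * (e' * v.2 - d' * v.1) + b * e' * v.1)
     - e' ^+ 2 * qform a b c v); first by rewrite L0 Q0; ring.
  by rewrite /D /conic_det /qform; ring.
have D2 : D * v.2 ^+ 2 = 0.
  rewrite (_ : D * _ = (d' * v.1 + e' * v.2) * (a * (d' * v.1 - e' * v.2) + b * d' * v.2)
     - d' ^+ 2 * qform a b c v); first by rewrite L0 Q0; ring.
  by rewrite /D /conic_det /qform; ring.
have [->|Dn] := eqVneq D 0; [by left | right].
move/eqP: D1 D2; rewrite mulf_eq0 (negbTE Dn) sqrf_eq0 => /eqP v1 /eqP.
rewrite mulf_eq0 (negbTE Dn) sqrf_eq0 => /eqP v2.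
by case: v {L0 Q0} v1 v2 => x y /= -> ->.
Qed.

Lemma Vaff_conic_det_neq0 a b c d e g : conic_det a b c d e g != 0 ->
  Vaff [set z | conic a b c d e g z = 0] = set0.
Proof.
move=> det_neq0; apply/seteqP; split => // C VaffC.
have [[[p Cp] Caff] [CV _]] := VaffC.
have F0 : conic a b c d e g p = 0 := CV p Cp.
have smooth : conic_dx a b d p != 0 \/ conic_dy b c e p != 0.
  case: (eqVneq (conic_dx a b d p) 0) => [X0|]; last by left.
  case: (eqVneq (conic_dy b c e p) 0) => [Y0|]; last by right.
  by move: det_neq0; rewrite (conic_det_singular F0 X0 Y0) eqxx.
have [D [cD DV Dp [q Dq qp]]] := conic_arc_smooth F0 smooth.
have Cq : C q by apply: (Vaff_absorb VaffC cD DV) => //; exists p.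
have Ft t : conic a b c d e g (affine_comb p q t) = 0 by apply/CV/Caff.
have F1 := Ft 1; have Fm1 := Ft (-1); rewrite !conic_affine_comb F0 add0r in F1 Fm1.
set v := (q.1 - p.1, q.2 - p.2) in F1 Fm1.
have Q0 : qform a b c v = 0.
  have : 2 * qform a b c v = 0 by rewrite -[RHS](addr0 0) -{1}F1 -{1}Fm1; ring.
  by move/eqP; rewrite mulf_eq0 pnatr_eq0 /= => /eqP.
have L0 : conic_dx a b d p * v.1 + conic_dy b c e p * v.2 = 0.
  by move: F1; rewrite Q0 mulr0 addr0 mul1r.
case: (conic_det_line F0 L0 Q0) => [det0|]; first by move: det_neq0; rewrite det0 eqxx.
case=> /eqP; rewrite subr_eq0 => /eqP q1 /eqP; rewrite subr_eq0 => /eqP q2.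
by apply: qp; case: q q1 q2 {Dq Cq F1 Fm1 Ft v L0 Q0} => ? ? /= -> ->; case: p {Cp F0 Dp smooth}.
Qed.

End Conics.

(** * Degenerate conics *)

Section DegenerateConics.
Variable R : realType.
Implicit Types (a b c d e g : R) (z v w : R * R) (V : set (R * R)).

Lemma Vaff_conic_linear d e g : (d != 0) || (e != 0) ->
  Vaff [set z | conic 0 0 0 d e g z = 0] = [set level_line d e (- g)].
Proof.
move=> nz; have -> : [set z | conic 0 0 0 d e g z = 0] =
    [set z | (fun u => u = - g) (d * z.1 + e * z.2)].
  apply/seteqP; split => z /=; rewrite /conic => H.
    by apply/eqP; rewrite -subr_eq0 opprK -H; apply/eqP; ring.
  by rewrite !mul0r !add0r H; ring.
rewrite (@Vaff_level_sets R d e (fun u => u = - g)) //; last by move=> u u' -> ->; rewrite ltxx.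
by apply/seteqP; split => C /=; [move=> [u -> ->] | move=> ->; exists (- g)].
Qed.

Definition conic_center a b c d e : R * R :=
  ((b * e - 2 * c * d) / (4 * a * c - b ^+ 2), (b * d - 2 * a * e) / (4 * a * c - b ^+ 2)).

Lemma conic_center_shift a b c d e g z : 4 * a * c - b ^+ 2 != 0 ->
  conic a b c d e g z = conic_det a b c d e g / (4 * a * c - b ^+ 2) +
    qform a b c (z.1 - (conic_center a b c d e).1, z.2 - (conic_center a b c d e).2).
Proof. by move=> D0; rewrite /conic /conic_center /conic_det /qform /=; field. Qed.

Lemma qform0 a b c : qform a b c (0, 0) = 0.
Proof. by rewrite /qform /= expr0n /= !mulr0 !addr0. Qed.

(* Completing the square: 4 a Q(u) = (2 a u1 + b u2)^2 + (4 a c - b^2) u2^2. *)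
Lemma qform_definite a b c (u : R * R) : b ^+ 2 - 4 * a * c < 0 -> qform a b c u = 0 -> u = (0, 0).
Proof.
move=> neg Q0; have an : a != 0.
  by apply: contraTneq neg => ->; rewrite !(mulr0, mul0r) subr0 -leNgt sqr_ge0.
have I : 4 * a * qform a b c u = (2 * a * u.1 + b * u.2) ^+ 2 + (4 * a * c - b ^+ 2) * u.2 ^+ 2.
  by rewrite /qform; ring.
rewrite Q0 mulr0 in I.
have h1 : 0 <= (2 * a * u.1 + b * u.2) ^+ 2 by exact: sqr_ge0.
have h2 : 0 <= (4 * a * c - b ^+ 2) * u.2 ^+ 2 by rewrite mulr_ge0 ?sqr_ge0 //; lra.
have u2 : u.2 = 0.
  have /eqP : (4 * a * c - b ^+ 2) * u.2 ^+ 2 = 0 by lra.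
  by rewrite mulf_eq0 sqrf_eq0 => /orP [/eqP|/eqP //]; lra.
have /eqP : 2 * a * u.1 + b * u.2 = 0 by apply/eqP; rewrite -sqrf_eq0; apply/eqP; lra.
rewrite u2 mulr0 addr0 !mulf_eq0 pnatr_eq0 (negbTE an) /= => /eqP u1.
by case: u u1 u2 {I h1 h2 Q0} => ? ? /= -> ->.
Qed.

Lemma Vaff_conic_elliptic a b c d e g : b ^+ 2 - 4 * a * c < 0 -> conic_det a b c d e g = 0 ->
  Vaff [set z | conic a b c d e g z = 0] = [set [set conic_center a b c d e]].
Proof.
move=> neg det0; have D0 : 4 * a * c - b ^+ 2 != 0 by apply/lt0r_neq0; lra.
suff -> : [set z | conic a b c d e g z = 0] = [set conic_center a b c d e] by exact: Vaff1.
apply/seteqP; split => z /=.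
  rewrite conic_center_shift // det0 mul0r add0r => /(qform_definite neg) [].
  move=> /eqP; rewrite subr_eq0 => /eqP z1 /eqP; rewrite subr_eq0 => /eqP z2.
  by rewrite [z]surjective_pairing z1 z2 /conic_center.
by move=> ->; rewrite conic_center_shift // det0 !subrr qform0 mul0r addr0.
Qed.

Definition cross v w : R := v.1 * w.2 - v.2 * w.1.

Definition polar_form a b c v w : R :=
  2 * a * v.1 * w.1 + b * (v.1 * w.2 + v.2 * w.1) + 2 * c * v.2 * w.2.

Lemma polar_form_sqr a b c v w : polar_form a b c v w ^+ 2 =
  4 * qform a b c v * qform a b c w + (b ^+ 2 - 4 * a * c) * cross v w ^+ 2.
Proof. by rewrite /polar_form /qform /cross; ring. Qed.

(* Expand u in the basis (v, w): the isotropic cone of Q is the union of the two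
   lines spanned by the isotropic vectors v and w. *)
Lemma qform_isotropic_lines a b c (u : R * R) v w :
  qform a b c v = 0 -> qform a b c w = 0 -> cross v w != 0 -> polar_form a b c v w != 0 ->
  qform a b c u = 0 ->
  (exists t, u = (t * v.1, t * v.2)) \/ (exists t, u = (t * w.1, t * w.2)).
Proof.
move=> Qv Qw cn Bn Qu.
have : qform a b c u * cross v w ^+ 2 = qform a b c v * cross u w ^+ 2 +
    qform a b c w * cross v u ^+ 2 + polar_form a b c v w * (cross u w * cross v u).
  by rewrite /qform /cross /polar_form; ring.
rewrite Qu Qv Qw !mul0r !add0r => /esym/eqP.
rewrite !mulf_eq0 (negbTE Bn) /= => /orP [] /eqP c0; [right | left].
  exists (cross v u / cross v w); case: u {Qu} c0 => x y; rewrite /cross /= => c0.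
  congr pair; [apply: (eq_of_diff_mul0 (k := v.1 / cross v w) c0) |
               apply: (eq_of_diff_mul0 (k := v.2 / cross v w) c0)]; by rewrite /cross; field.
exists (cross u w / cross v w); case: u {Qu} c0 => x y; rewrite /cross /= => c0.
congr pair; [apply: (eq_of_diff_mul0 (k := w.1 / cross v w) c0) |
             apply: (eq_of_diff_mul0 (k := w.2 / cross v w) c0)]; by rewrite /cross; field.
Qed.

(* V is the union of the lines z0 + R v and z0 + R w: it is connected, but it does not
   contain the midpoint of z0 + v and z0 + w. *)
Lemma Vaff_crossing_lines a b c z0 v w V :
  (forall z, V z <-> qform a b c (z.1 - z0.1, z.2 - z0.2) = 0) ->
  qform a b c v = 0 -> qform a b c w = 0 -> cross v w != 0 -> polar_form a b c v w != 0 ->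
  Vaff V = set0.
Proof.
move=> HV Qv Qw cn Bn.
set Lv := fun t : R => (z0.1 + t * v.1, z0.2 + t * v.2).
set Lw := fun t : R => (z0.1 + t * w.1, z0.2 + t * w.2).
have Q_line t u : qform a b c u = 0 -> qform a b c (t * u.1, t * u.2) = 0.
  by move=> Qu; rewrite -[RHS](mulr0 (t ^+ 2)) -Qu /qform /=; ring.
have VE : V = range Lv `|` range Lw.
  apply/seteqP; split => [z /HV /(qform_isotropic_lines Qv Qw cn Bn)|z].
    by case=> -[t [e1 e2]]; [left | right]; exists t => //;
      rewrite /Lv /Lw -e1 -e2; case: z {e1 e2} => x y /=; congr pair; ring.
  by case=> -[t _ <-]; apply/HV; rewrite /Lv /Lw /= !(addrC z0.1) !(addrC z0.2) !addrK Q_line.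
have cV : connected V.
  rewrite VE; apply: connectedU; try exact: connected_range_line.
  by exists z0; split; exists 0 => //; rewrite /Lv /Lw !mul0r !addr0; case: z0 {HV VE Lv Lw}.
rewrite Vaff_connected //; apply/seteqP; split => C // [_ [_ affV]].
have Vv : V (Lv 1) by rewrite VE; left; exists 1.
have Vw : V (Lw 1) by rewrite VE; right; exists 1.
have /HV := affV _ _ Vv Vw (1 / 2).
have -> : qform a b c (((1 - 1 / 2) * (Lv 1).1 + 1 / 2 * (Lw 1).1) - z0.1,
                       ((1 - 1 / 2) * (Lv 1).2 + 1 / 2 * (Lw 1).2) - z0.2) =
          (qform a b c v + qform a b c w + polar_form a b c v w) / 4.
  by rewrite /qform /polar_form /Lv /Lw /=; field.
rewrite Qv Qw !add0r => /eqP; rewrite mulf_eq0 invr_eq0 pnatr_eq0 orbF.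
exact/negP.
Qed.

Lemma Vaff_conic_hyperbolic a b c d e g : 0 < b ^+ 2 - 4 * a * c ->
  conic_det a b c d e g = 0 -> Vaff [set z | conic a b c d e g z = 0] = set0.
Proof.
move=> pos det0; have D0 : 4 * a * c - b ^+ 2 != 0 by apply/ltr0_neq0; lra.
suff [v [w [Qv Qw cn]]] :
    exists v w, [/\ qform a b c v = 0, qform a b c w = 0 & cross v w != 0].
  apply: (Vaff_crossing_lines (z0 := conic_center a b c d e) _ Qv Qw cn).
    by move=> z; rewrite /= conic_center_shift // det0 mul0r add0r.
  rewrite -sqrf_eq0 polar_form_sqr Qv Qw !mulr0 add0r mulf_eq0 negb_or sqrf_eq0 cn andbT.
  exact: lt0r_neq0.
have [a0|an] := eqVneq a 0.
  have bn : b != 0.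
    by apply/eqP => b0; move: pos; rewrite a0 b0 !(mulr0, mul0r, expr0n) /= subr0 ltxx.
  exists (1, 0), (- c, b); rewrite /qform /cross a0 /=; split; try ring.
  by rewrite mul1r mul0r subr0.
(* (-b +- s, 2 a) = 2 a (t, 1) for the two roots t of a t^2 + b t + c. *)
set s := Num.sqrt (b ^+ 2 - 4 * a * c).
have s2 : s ^+ 2 - (b ^+ 2 - 4 * a * c) = 0 by rewrite sqr_sqrtr ?subrr // ltW.
exists (- b + s, 2 * a), (- b - s, 2 * a); split.
- by apply: (eq_of_diff_mul0 (k := a) s2); rewrite /qform /=; ring.
- by apply: (eq_of_diff_mul0 (k := a) s2); rewrite /qform /=; ring.
- rewrite /cross /= (_ : _ - _ = 4 * a * s); last by ring.
  by rewrite !mulf_neq0 ?pnatr_eq0 // gt_eqF ?sqrtr_gt0.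
Qed.

(* When the discriminant and the determinant vanish, f(x, y) = a u^2 + d u + g
   with u = x + b / (2 a) y: the zero set is a union of parallel lines. *)
Lemma Vaff_conic_parabolic a b c d e g : a != 0 -> b ^+ 2 - 4 * a * c = 0 ->
  conic_det a b c d e g = 0 ->
  Vaff [set z | conic a b c d e g z = 0] =
  [set C | exists2 u, a * u ^+ 2 + d * u + g = 0 & C = level_line 1 (b / (2 * a)) u].
Proof.
move=> an disc0 det0; have a2 : 2 * a != 0 by rewrite mulf_neq0 // pnatr_eq0.
have cE : c = b ^+ 2 / (4 * a).
  by apply/esym/(eq_of_diff_mul0 (k := (4 * a)^-1) disc0); field.
have eE : e = b * d / (2 * a).
  have : (2 * a * e - b * d) ^+ 2 = 0.
    rewrite (_ : _ ^+ 2 = - (b ^+ 2 - 4 * a * c) * (4 * a * g - d ^+ 2)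
                          - 4 * a * conic_det a b c d e g); first by rewrite disc0 det0; ring.
    by rewrite /conic_det; ring.
  by move/eqP; rewrite sqrf_eq0 subr_eq0 => /eqP H; apply: (mulfI a2); rewrite H; field.
have fE z : conic a b c d e g z =
    a * (1 * z.1 + b / (2 * a) * z.2) ^+ 2 + d * (1 * z.1 + b / (2 * a) * z.2) + g.
  by rewrite /conic cE eE; field.
have -> : [set z | conic a b c d e g z = 0] =
    [set z | (fun u => a * u ^+ 2 + d * u + g = 0) (1 * z.1 + b / (2 * a) * z.2)].
  by apply/seteqP; split => z /=; rewrite fE.
rewrite (@Vaff_level_sets R 1 (b / (2 * a)) (fun u => a * u ^+ 2 + d * u + g = 0)) ?oner_neq0 //.
exact: quadratic_roots_interval_free.
Qed.

Lemma Vaff_conic_parabolic_a0 c d e g : c != 0 -> conic_det 0 0 c d e g = 0 ->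
  Vaff [set z | conic 0 0 c d e g z = 0] =
  [set C | exists2 u, c * u ^+ 2 + e * u + g = 0 & C = level_line 0 1 u].
Proof.
move=> cn det0; have d0 : d = 0.
  have /eqP : c * d ^+ 2 = 0 by apply: (eq_of_diff_mul0 (k := -1) det0); rewrite /conic_det; ring.
  by rewrite mulf_eq0 (negbTE cn) sqrf_eq0 => /eqP.
have -> : [set z | conic 0 0 c d e g z = 0] =
    [set z | (fun u => c * u ^+ 2 + e * u + g = 0) (0 * z.1 + 1 * z.2)].
  by apply/seteqP; split => z /=; rewrite /conic d0 !mul0r !mul1r !add0r addr0.
rewrite (@Vaff_level_sets R 0 1 (fun u => c * u ^+ 2 + e * u + g = 0)) ?oner_neq0 ?orbT //.
exact: quadratic_roots_interval_free.
Qed.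

End DegenerateConics.

Section Outputs.
Variable R : realType.
Implicit Types (a b c d e g : R).
Local Notation V a b c d e g := [set z : R * R | conic a b c d e g z = 0].

Lemma output_family_nil : output_family ([::] : seq (descr R)) = set0.
Proof. by apply/seteqP; split => C // [e]. Qed.

Lemma output_family1 (x : descr R) : output_family [:: x] = [set descr_set x].
Proof.
apply/seteqP; split => C; first by move=> [e]; rewrite inE => /eqP -> ->.
by move=> ->; exists x; rewrite ?inE.
Qed.

Lemma output_family_map (D : R -> descr R) (L : R -> set (R * R)) (S : set R) rs :
  (forall x, (x \in rs) <-> S x) -> (forall u, descr_set (D u) = L u) ->
  output_family (map D rs) = [set C | exists2 u, S u & C = L u].
Proof.
move=> HS HD; apply/seteqP; split => C.
  by move=> [e /mapP [u urs ->] ->]; exists u; [apply/HS | apply: HD].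
move=> [u Su ->]; exists (D u); last by rewrite HD.
by apply/mapP; exists u => //; apply/HS.
Qed.

Lemma descr_set_point (x y : R) : descr_set ((x, y), [::]) = [set (x, y)].
Proof.
apply/seteqP; split => z /=; first by move=> [t [_ ->]]; rewrite !big_ord0 !addr0.
by move=> ->; exists [::]; rewrite !big_ord0 !addr0.
Qed.

Lemma descr_set_line (x y v1 v2 : R) : descr_set ((x, y), [:: (v1, v2)]) =
  [set z | exists t, z = (x + t * v1, y + t * v2)].
Proof.
apply/seteqP; split => z /=; first by move=> [t [_ ->]]; exists t`_0; rewrite !big_ord1.
by move=> [t ->]; exists [:: t]; rewrite !big_ord1.
Qed.

Lemma descr_set_plane : descr_set (((0 : R), (0 : R)), [:: (1, 0); (0, 1)]) = setT.
Proof.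
apply/seteqP; split => // z _; exists [:: z.1; z.2]; split => //=.
by rewrite !big_ord_recr !big_ord0 /=; case: z => x y /=; congr pair; ring.
Qed.

Lemma level_line_param (al be u x y v1 v2 : R) : (al != 0) || (be != 0) ->
  al * x + be * y = u -> al * v1 + be * v2 = 0 -> v1 ^+ 2 + v2 ^+ 2 != 0 ->
  level_line al be u = [set z | exists t, z = (x + t * v1, y + t * v2)].
Proof.
move=> nz hxy hv nv; apply/seteqP; split => z /=; last first.
  by move=> [t ->]; rewrite /level_line /= -hxy -[RHS]addr0 -(mulr0 t) -hv; ring.
case: z => z1 z2; rewrite /level_line /= => hz.
have hw : al * (z1 - x) + be * (z2 - y) = 0 by rewrite -(subrr u) -{1}hz -hxy; ring.
have cr : (z1 - x) * v2 - (z2 - y) * v1 = 0.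
  case/orP: nz => h; apply: (mulfI h); rewrite mulr0.
    by apply: (eq_of_diff_mul0 (k := v2) hw); apply: (eq_of_diff_mul0 (k := - (z2 - y)) hv); ring.
  by apply: (eq_of_diff_mul0 (k := - v1) hw); apply: (eq_of_diff_mul0 (k := z1 - x) hv); ring.
exists (((z1 - x) * v1 + (z2 - y) * v2) / (v1 ^+ 2 + v2 ^+ 2)); congr pair.
  by apply/esym/(eq_of_diff_mul0 (k := - v2 / (v1 ^+ 2 + v2 ^+ 2)) cr); field.
by apply/esym/(eq_of_diff_mul0 (k := v1 / (v1 ^+ 2 + v2 ^+ 2)) cr); field.
Qed.

Lemma sqr_sum3_eq0 (x y z : R) : x * x + y * y + z * z = 0 -> [/\ x = 0, y = 0 & z = 0].
Proof.
move=> h; have h1 : 0 <= x * x by rewrite -expr2 sqr_ge0.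
have h2 : 0 <= y * y by rewrite -expr2 sqr_ge0.
have h3 : 0 <= z * z by rewrite -expr2 sqr_ge0.
have sq0 (t : R) : t * t = 0 -> t = 0 by move/eqP; rewrite mulf_eq0 orbb => /eqP.
by split; apply: sq0; lra.
Qed.

Lemma conic_det_expanded a b c d e g :
  4 * (a * c * g) + b * d * e - a * (e * e) - c * (d * d) - b * b * g = conic_det a b c d e g.
Proof. by rewrite /conic_det; ring. Qed.

Lemma disc_expanded a b c : b * b - 4 * (a * c) = b ^+ 2 - 4 * a * c.
Proof. by ring. Qed.

Lemma Vaff_output_det_neq0 a b c d e g :
  4 * (a * c * g) + b * d * e - a * (e * e) - c * (d * d) - b * b * g != 0 ->
  output_family [::] = Vaff (V a b c d e g).
Proof. by rewrite conic_det_expanded output_family_nil => /Vaff_conic_det_neq0 ->. Qed.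

Lemma Vaff_output_plane a b c d e g :
  a * a + b * b + c * c = 0 -> d * d + e * e = 0 -> g = 0 ->
  output_family [:: ((0 : R), (0 : R), [:: (1, 0); (0, 1)])] = Vaff (V a b c d e g).
Proof.
move=> /sqr_sum3_eq0 [-> -> ->] de0 ->.
have [-> -> _] : [/\ d = 0, e = 0 & 0 = 0 :> R] by apply: sqr_sum3_eq0; rewrite mulr0 addr0.
rewrite output_family1 descr_set_plane (_ : V 0 0 0 0 0 0 = setT) ?VaffT //.
by apply/seteqP; split => z // _; rewrite /conic /=; ring.
Qed.

Lemma Vaff_output_empty a b c d e g :
  a * a + b * b + c * c = 0 -> d * d + e * e = 0 -> g != 0 ->
  output_family [::] = Vaff (V a b c d e g).
Proof.
move=> /sqr_sum3_eq0 [-> -> ->] de0 gn.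
have [-> -> _] : [/\ d = 0, e = 0 & 0 = 0 :> R] by apply: sqr_sum3_eq0; rewrite mulr0 addr0.
rewrite output_family_nil (_ : V 0 0 0 0 0 g = set0) ?Vaff0 //.
apply/seteqP; split => z //=; rewrite /conic !mul0r !add0r => g0.
by move: gn; rewrite g0 eqxx.
Qed.

Lemma Vaff_output_line a b c d e g : a * a + b * b + c * c = 0 -> d * d + e * e != 0 ->
  output_family [:: ((0 - g) * d / (d * d + e * e), (0 - g) * e / (d * d + e * e),
                     [:: (0 - e, d + 0)])] = Vaff (V a b c d e g).
Proof.
move=> /sqr_sum3_eq0 [-> -> ->] den.
have nz : (d != 0) || (e != 0).
  by apply: contraNT den; rewrite negb_or !negbK => /andP [/eqP -> /eqP ->]; rewrite mulr0 addr0.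
rewrite Vaff_conic_linear // output_family1 descr_set_line.
rewrite (@level_line_param d e (- g) ((0 - g) * d / (d * d + e * e))
  ((0 - g) * e / (d * d + e * e)) (0 - e) (d + 0) nz) //.
- by field.
- by ring.
- by rewrite (_ : _ + _ = d * d + e * e) //; ring.
Qed.

Lemma Vaff_output_point a b c d e g :
  4 * (a * c * g) + b * d * e - a * (e * e) - c * (d * d) - b * b * g = 0 ->
  b * b - 4 * (a * c) < 0 ->
  output_family [:: ((b * e - 2 * c * d) / (0 - (b * b - 4 * (a * c))),
                     (b * d - 2 * a * e) / (0 - (b * b - 4 * (a * c))), [::])] =
  Vaff (V a b c d e g).
Proof.
rewrite conic_det_expanded disc_expanded => det0 neg.
rewrite Vaff_conic_elliptic // output_family1 descr_set_point /conic_center.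
by rewrite (_ : 0 - _ = 4 * a * c - b ^+ 2) //; ring.
Qed.

Lemma Vaff_output_hyperbolic a b c d e g :
  4 * (a * c * g) + b * d * e - a * (e * e) - c * (d * d) - b * b * g = 0 ->
  b * b - 4 * (a * c) != 0 -> 0 <= b * b - 4 * (a * c) ->
  output_family [::] = Vaff (V a b c d e g).
Proof.
rewrite conic_det_expanded disc_expanded => det0 disc0 disc_ge0.
by rewrite output_family_nil Vaff_conic_hyperbolic // lt0r disc0.
Qed.

Lemma Vaff_output_parallel_y a b c d e g (rs : seq R) :
  4 * (a * c * g) + b * d * e - a * (e * e) - c * (d * d) - b * b * g = 0 ->
  a * a + b * b + c * c != 0 -> b * b - 4 * (a * c) = 0 -> a = 0 ->
  (forall x, (x \in rs) = (c * x ^+ 2 + e * x + g == 0)) ->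
  output_family (map (fun u => (0 + 0, u + 0, [:: (1 + 0, 0 + 0)])) rs) = Vaff (V a b c d e g).
Proof.
rewrite conic_det_expanded => det0 quad0 disc0 a0 rsE; subst a.
have b0 : b = 0.
  by move/eqP: disc0; rewrite !(mul0r, mulr0) subr0 mulf_eq0 orbb => /eqP.
subst b; have cn : c != 0 by apply: contraNneq quad0 => ->; rewrite !mulr0 !addr0.
rewrite Vaff_conic_parabolic_a0 //; apply: output_family_map => [x|u].
  by rewrite rsE; split => [/eqP|->].
rewrite descr_set_line (level_line_param (x := 0 + 0) (y := u + 0) (v1 := 1 + 0) (v2 := 0 + 0)).
- by [].
- by rewrite oner_neq0 orbT.
- by ring.
- by ring.
- by rewrite (_ : _ + _ = 1 :> R) ?oner_neq0 //; ring.
Qed.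

Lemma Vaff_output_parallel_x a b c d e g (rs : seq R) :
  4 * (a * c * g) + b * d * e - a * (e * e) - c * (d * d) - b * b * g = 0 ->
  b * b - 4 * (a * c) = 0 -> a != 0 ->
  (forall x, (x \in rs) = (a * x ^+ 2 + d * x + g == 0)) ->
  output_family (map (fun u => (u + 0, 0 + 0, [:: (0 - b / (2 * a) + 0, 1 + 0)])) rs) =
  Vaff (V a b c d e g).
Proof.
rewrite conic_det_expanded disc_expanded => det0 disc0 an rsE.
rewrite Vaff_conic_parabolic //; apply: output_family_map => [x|u].
  by rewrite rsE; split => [/eqP|->].
rewrite descr_set_line (level_line_param (x := u + 0) (y := 0 + 0)
  (v1 := 0 - b / (2 * a) + 0) (v2 := 1 + 0)).
- by [].
- by rewrite oner_neq0.
- by ring.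
- by ring.
- rewrite !addr0 expr1n; apply/lt0r_neq0.
  by apply: ltr_wpDl; [exact: sqr_ge0 | exact: ltr01].
Qed.

End Outputs.

(** * The machine *)

Section Determinism.
Variable R : realType.
Implicit Types (P : program R).

Lemma roots_result_functional (reg r1 r2 : nat -> R) d s n :
  roots_result reg r1 d s n -> roots_result reg r2 d s n -> r1 = r2.
Proof.
rewrite /roots_result; case: ifP => _; first by move=> -> ->.
move=> [rs1 [s1 [m1 ->]]] [rs2 [s2 [m2 ->]]].
by have -> : rs1 = rs2 by apply: (irr_sorted_eq lt_trans ltxx s1 s2) => x; rewrite m1 m2.
Qed.

Ltac same_instr Hi :=
  match goal with H : nth _ _ _ = _ |- _ =>
    rewrite Hi in H; first [discriminate | injection H; intros; subst; reflexivity] end.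

Lemma step_deterministic P s s1 s2 : step P s s1 -> step P s s2 -> s1 = s2.
Proof.
case=> [pc reg out ? ? Hi _|pc reg out ? ? ? Hi _|pc reg out ? ? ? Hi _|pc reg out ? ? ? Hi _
       |pc reg out ? ? ? Hi _|pc reg out ? Hi _|pc reg out ? ? Hi _|pc reg out ? ? Hi _
       |pc reg reg' out d sr n Hi _ Hr|pc reg out ? ? Hi _] h2; inversion h2;
  try same_instr Hi.
match goal with H : nth _ _ _ = IRoots _ _ _ _ |- _ => rewrite Hi in H; case: H => *; subst end.
by rewrite (roots_result_functional Hr (ltac:(eassumption))).
Qed.

Lemma step_not_halted P s s' : step P s s' -> ~ halted P s.
Proof. by case=> *; rewrite /halted /= leqNgt; apply/negP/negPn. Qed.

Lemma reach_halted_unique P s t1 t2 :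
  reach P s t1 -> halted P t1 -> reach P s t2 -> halted P t2 -> t1 = t2.
Proof.
move=> r1; elim: r1 t2 => [s0|s0 s1 s3 st r IH] t2 h1 r2 h2.
  by case: r2 h1 => // ? ? ? /step_not_halted.
case: r2 st h2 => [? st /(step_not_halted st)//|? s1' ? st' r' st h2].
by apply: IH => //; rewrite (step_deterministic st st').
Qed.

End Determinism.

Section SymbolicExecution.
Variable R : realType.
Implicit Types (P : program R) (Q : mstate R -> Prop).

Definition can_reach P Q s := exists2 t, reach P s t & Q t.

Lemma can_reach_here P Q s : Q s -> can_reach P Q s.
Proof. by exists s => //; exact: reach_refl. Qed.

Lemma can_reach_step P Q s1 s2 : step P s1 s2 -> can_reach P Q s2 -> can_reach P Q s1.
Proof. by move=> st [t r q]; exists t => //; exact: reach_step st r. Qed.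

Lemma can_reach_const P Q pc reg out d c :
  nth (IJmp R pc) P pc = IConst d c -> (pc < size P)%N ->
  can_reach P Q (MState pc.+1 (upd reg d c) out) -> can_reach P Q (MState pc reg out).
Proof. by move=> Hi Hl; apply/can_reach_step/StConst. Qed.

Lemma can_reach_add P Q pc reg out d x y v :
  nth (IJmp R pc) P pc = IAdd R d x y -> (pc < size P)%N -> reg x + reg y = v ->
  can_reach P Q (MState pc.+1 (upd reg d v) out) -> can_reach P Q (MState pc reg out).
Proof. by move=> Hi Hl <-; apply/can_reach_step/StAdd. Qed.

Lemma can_reach_sub P Q pc reg out d x y v :
  nth (IJmp R pc) P pc = ISub R d x y -> (pc < size P)%N -> reg x - reg y = v ->
  can_reach P Q (MState pc.+1 (upd reg d v) out) -> can_reach P Q (MState pc reg out).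
Proof. by move=> Hi Hl <-; apply/can_reach_step/StSub. Qed.

Lemma can_reach_mul P Q pc reg out d x y v :
  nth (IJmp R pc) P pc = IMul R d x y -> (pc < size P)%N -> reg x * reg y = v ->
  can_reach P Q (MState pc.+1 (upd reg d v) out) -> can_reach P Q (MState pc reg out).
Proof. by move=> Hi Hl <-; apply/can_reach_step/StMul. Qed.

Lemma can_reach_div P Q pc reg out d x y v :
  nth (IJmp R pc) P pc = IDiv R d x y -> (pc < size P)%N -> reg x / reg y = v ->
  can_reach P Q (MState pc.+1 (upd reg d v) out) -> can_reach P Q (MState pc reg out).
Proof. by move=> Hi Hl <-; apply/can_reach_step/StDiv. Qed.

Lemma can_reach_jmp P Q pc reg out l :
  nth (IJmp R pc) P pc = IJmp R l -> (pc < size P)%N ->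
  can_reach P Q (MState l reg out) -> can_reach P Q (MState pc reg out).
Proof. by move=> Hi Hl; apply/can_reach_step/StJmp. Qed.

Lemma can_reach_jeq P Q pc reg out x l v :
  nth (IJmp R pc) P pc = IJeq R x l -> (pc < size P)%N -> reg x = v ->
  (v = 0 -> can_reach P Q (MState l reg out)) ->
  (v != 0 -> can_reach P Q (MState pc.+1 reg out)) -> can_reach P Q (MState pc reg out).
Proof.
move=> Hi Hl Hv H1 H2; apply: (can_reach_step (StJeq reg out Hi Hl)).
by rewrite Hv; case: (eqVneq v 0) => h; [apply: H1 | apply: H2].
Qed.

Lemma can_reach_jlt P Q pc reg out x l v :
  nth (IJmp R pc) P pc = IJlt R x l -> (pc < size P)%N -> reg x = v ->
  (v < 0 -> can_reach P Q (MState l reg out)) ->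
  (0 <= v -> can_reach P Q (MState pc.+1 reg out)) -> can_reach P Q (MState pc reg out).
Proof.
move=> Hi Hl Hv H1 H2; apply: (can_reach_step (StJlt reg out Hi Hl)).
by rewrite Hv; case: (ltP v 0) => h; [apply: H1 | apply: H2].
Qed.

Lemma can_reach_emit P Q pc reg out k r e :
  nth (IJmp R pc) P pc = IEmit R k r -> (pc < size P)%N -> emit_descr reg k r = e ->
  can_reach P Q (MState pc.+1 reg (rcons out e)) -> can_reach P Q (MState pc reg out).
Proof. by move=> Hi Hl <-; apply/can_reach_step/StEmit. Qed.

Lemma horner_poly_of_regs2 (reg : nat -> R) s x :
  (poly_of_regs reg s 2).[x] = reg s + reg s.+1 * x + reg s.+2 * x ^+ 2.
Proof.
rewrite /poly_of_regs horner_poly !big_ord_recl big_ord0 /= addn0 expr0 mulr1 expr1.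
by rewrite /bump /= addn1 addn2 addr0 addrA.
Qed.

Lemma poly_of_regs2_neq0 (reg : nat -> R) s : reg s.+2 != 0 -> poly_of_regs reg s 2 != 0.
Proof.
move=> r0; apply/eqP => p0; move: r0.
have : (poly_of_regs reg s 2)`_2 = reg (s + 2)%N by rewrite /poly_of_regs coef_poly.
by rewrite p0 coef0 addn2 => <-; rewrite eqxx.
Qed.

Definition roots_regs (reg : nat -> R) (d : nat) (rs : seq R) : nat -> R :=
  fun i => if i == d then (size rs)%:R
     else if (d < i <= d + size rs)%N then nth 0 rs (i - d.+1) else reg i.

Lemma roots_regs0 reg d : roots_regs reg d [::] = upd reg d 0%:R.
Proof.
apply: funext => i; rewrite /roots_regs /upd /=; case: eqP => // ne.
by case: (d < i <= d + 0)%N / boolP => // h; lia.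
Qed.

Lemma roots_regs1 reg d u1 : roots_regs reg d [:: u1] = upd (upd reg d 1%:R) d.+1 u1.
Proof.
apply: funext => i; rewrite /roots_regs /upd /=.
case: (eqVneq i d.+1) => [->|n1]; first by rewrite (gtn_eqF (ltnSn d)) ltnSn addn1 leqnn subnn.
by case: eqP => // ne; case: (d < i <= d + 1)%N / boolP => // h; lia.
Qed.

Lemma roots_regs2 reg d u1 u2 :
  roots_regs reg d [:: u1; u2] = upd (upd (upd reg d 2%:R) d.+1 u1) d.+2 u2.
Proof.
apply: funext => i; rewrite /roots_regs /upd /=.
case: (eqVneq i d.+2) => [->|n2].
  by rewrite (gtn_eqF (leqW (ltnSn d))) ltnW ?ltnSn //= addn2 leqnn /= subSS subSn // subnn.
case: (eqVneq i d.+1) => [->|n1].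
  by rewrite (gtn_eqF (ltnSn d)) ltnSn addn2 /= leqW // subnn.
by case: eqP => // ne; case: (d < i <= d + 2)%N / boolP => // h; lia.
Qed.

(* A quadratic has at most two roots, so only three continuations need to be provided. *)
Lemma can_reach_roots2 P Q pc reg out d s :
  nth (IJmp R pc) P pc = IRoots R d s 2 -> (pc < size P)%N -> poly_of_regs reg s 2 != 0 ->
  (forall rs, sorted <%R rs -> (forall x, (x \in rs) = root (poly_of_regs reg s 2) x) ->
   match rs with
   | [::] => can_reach P Q (MState pc.+1 (upd reg d 0%:R) out)
   | [:: u1] => can_reach P Q (MState pc.+1 (upd (upd reg d 1%:R) d.+1 u1) out)
   | [:: u1; u2] =>
       can_reach P Q (MState pc.+1 (upd (upd (upd reg d 2%:R) d.+1 u1) d.+2 u2) out)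
   | _ => True end) ->
  can_reach P Q (MState pc reg out).
Proof.
move=> Hi Hl pn H; set p := poly_of_regs reg s 2 in pn H.
have srt : sorted <%R (rootsR p) by exact: sorted_roots.
have mem x : (x \in rootsR p) = root p x by rewrite -(roots_on_rootsR pn x).
have sz : (size (rootsR p) <= 2)%N.
  have uq : uniq (rootsR p) := sorted_uniq lt_trans ltxx srt.
  have al : all (root p) (rootsR p) by apply/allP => x; rewrite mem.
  by rewrite -ltnS; apply: leq_trans (max_poly_roots pn al uq) (size_poly _ _).
have Hr : roots_result reg (roots_regs reg d (rootsR p)) d s 2.
  by rewrite /roots_result (negbTE pn); exists (rootsR p); split.
have := H _ srt mem; have st := StRoots out Hi Hl Hr.
case: (rootsR p) st sz => [|u1 [|u2 [|]]] // st _ cont; apply: (can_reach_step st).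
- by rewrite roots_regs0.
- by rewrite roots_regs1.
- by rewrite roots_regs2.
Qed.

End SymbolicExecution.

(** * The algorithm *)

Section Algorithm.
Variable R : realType.
Implicit Types (a b c d e g : R).

(* Registers 0..5 hold a, d, b, g, e, c, i.e. f = a x^2 + (b y + d) x + (c y^2 + e y + g).
   Register 99 is never written, so it stays 0 and [IAdd R r s 99] copies s to r.
   Tests: pc 16 on the determinant (reg 25); pc 22 on a^2 + b^2 + c^2 (reg 29), then
   pc 25 on d^2 + e^2 and pc 27 on g; pc 48-49 on the discriminant b^2 - 4ac (reg 46);
   pc 64 on a.  Jumps to 119 halt. *)
Definition conic_program : program R := [::
 (*0*) IConst 10 4; IMul R 11 0 5; IMul R 12 11 3; IMul R 13 10 12; IMul R 14 2 1;
 (*5*) IMul R 15 14 4; IAdd R 16 13 15; IMul R 17 4 4; IMul R 18 0 17; ISub R 19 16 18;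
 (*10*) IMul R 20 1 1; IMul R 21 5 20; ISub R 22 19 21; IMul R 23 2 2; IMul R 24 23 3;
 (*15*) ISub R 25 22 24; IJeq R 25 18; IJmp R 119; IMul R 26 0 0; IAdd R 27 26 23;
 (*20*) IMul R 28 5 5; IAdd R 29 27 28; IJeq R 29 24; IJmp R 46; IAdd R 30 20 17;
 (*25*) IJeq R 30 27; IJmp R 37; IJeq R 3 29; IJmp R 119; IConst 31 0;
 (*30*) IConst 32 0; IConst 33 1; IConst 34 0; IConst 35 0; IConst 36 1;
 (*35*) IEmit R 2 31; IJmp R 119; ISub R 38 99 3; IMul R 39 38 1; IDiv R 40 39 30;
 (*40*) IMul R 44 38 4; IDiv R 41 44 30; ISub R 42 99 4; IAdd R 43 1 99; IEmit R 1 40;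
 (*45*) IJmp R 119; IMul R 45 10 11; ISub R 46 23 45; IJeq R 46 64; IJlt R 46 51;
 (*50*) IJmp R 119; ISub R 48 99 46; IConst 49 2; IMul R 50 2 4; IMul R 51 49 5;
 (*55*) IMul R 52 51 1; ISub R 53 50 52; IDiv R 54 53 48; IMul R 56 49 0; IMul R 57 56 4;
 (*60*) ISub R 58 14 57; IDiv R 55 58 48; IEmit R 0 54; IJmp R 119; IJeq R 0 94;
 (*65*) IAdd R 60 3 99; IAdd R 61 1 99; IAdd R 62 0 99; IConst 70 2; IMul R 71 70 0;
 (*70*) IDiv R 72 2 71; ISub R 73 99 72; IConst 74 1; IRoots R 64 60 2; IJeq R 64 119;
 (*75*) ISub R 75 64 74; IJeq R 75 88; IAdd R 80 65 99; IAdd R 81 99 99; IAdd R 82 73 99;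
 (*80*) IAdd R 83 74 99; IEmit R 1 80; IAdd R 84 66 99; IAdd R 85 99 99; IAdd R 86 73 99;
 (*85*) IAdd R 87 74 99; IEmit R 1 84; IJmp R 119; IAdd R 80 65 99; IAdd R 81 99 99;
 (*90*) IAdd R 82 73 99; IAdd R 83 74 99; IEmit R 1 80; IJmp R 119; IAdd R 100 3 99;
 (*95*) IAdd R 101 4 99; IAdd R 102 5 99; IConst 103 1; IRoots R 104 100 2; IJeq R 104 119;
 (*100*) ISub R 107 104 103; IJeq R 107 113; IAdd R 110 99 99; IAdd R 111 105 99;
 (*104*) IAdd R 112 103 99; IAdd R 113 99 99; IEmit R 1 110; IAdd R 114 99 99;
 (*108*) IAdd R 115 106 99; IAdd R 116 103 99; IAdd R 117 99 99; IEmit R 1 114;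
 (*112*) IJmp R 119; IAdd R 110 99 99; IAdd R 111 105 99; IAdd R 112 103 99;
 (*116*) IAdd R 113 99 99; IEmit R 1 110; IJmp R 119].

Ltac eval_regs := rewrite /upd /=; reflexivity.

Ltac exec_step := first
  [ eapply can_reach_const; [reflexivity | reflexivity |]
  | eapply can_reach_add; [reflexivity | reflexivity | eval_regs |]
  | eapply can_reach_sub; [reflexivity | reflexivity | eval_regs |]
  | eapply can_reach_mul; [reflexivity | reflexivity | eval_regs |]
  | eapply can_reach_div; [reflexivity | reflexivity | eval_regs |]
  | eapply can_reach_jmp; [reflexivity | reflexivity |]
  | eapply can_reach_emit; [reflexivity | reflexivity | rewrite /emit_descr; eval_regs |] ].

Tactic Notation "branch_eq" ident(H) :=
  eapply can_reach_jeq; [reflexivity | reflexivity | eval_regs | move=> H | move=> H].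
Tactic Notation "branch_lt" ident(H) :=
  eapply can_reach_jlt; [reflexivity | reflexivity | eval_regs | move=> H | move=> H].

Ltac absurd_branch H :=
  exfalso; move: H; rewrite ?subrr ?eqxx ?oner_eq0 ?pnatr_eq0 //; try (move=> ?; lra).

Definition outputs_Vaff a b c d e g (t : mstate R) :=
  halted conic_program t /\
  output_family (ms_out t) = Vaff [set z | conic a b c d e g z = 0].

Lemma run_parallel_x a b c d e g reg :
  reg 0 = a -> reg 1 = d -> reg 2 = b -> reg 3 = g -> reg 99 = 0 ->
  4 * (a * c * g) + b * d * e - a * (e * e) - c * (d * d) - b * b * g = 0 ->
  b * b - 4 * (a * c) = 0 -> a != 0 ->
  can_reach conic_program (outputs_Vaff a b c d e g) (MState 65 reg [::]).
Proof.
move=> ra rd rb rg r99 det0 disc0 an; subst a d b g.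
do 8 exec_step.
eapply can_reach_roots2; [reflexivity | reflexivity | |move=> rs _ rsE].
  by apply: poly_of_regs2_neq0; rewrite /upd /= r99 addr0.
have {}rsE x : (x \in rs) = (reg 0 * x ^+ 2 + reg 1 * x + reg 3 == 0).
  by rewrite rsE /root horner_poly_of_regs2 /upd /= r99 !addr0; congr (_ == _); ring.
have outE := Vaff_output_parallel_x det0 disc0 an rsE.
case: rs rsE outE => [|u1 [|u2 []]] // rsE outE.
- branch_eq k0; last by absurd_branch k0.
  by apply: can_reach_here; split => //=; rewrite r99.
- branch_eq k0; first by absurd_branch k0.
  exec_step; branch_eq k1; last by absurd_branch k1.
  by do 6 exec_step; apply: can_reach_here; split => //=; rewrite r99.
- branch_eq k0; first by absurd_branch k0.
  exec_step; branch_eq k1; first by absurd_branch k1.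
  by do 11 exec_step; apply: can_reach_here; split => //=; rewrite r99.
Qed.

Lemma run_parallel_y a b c d e g reg :
  reg 3 = g -> reg 4 = e -> reg 5 = c -> reg 99 = 0 ->
  4 * (a * c * g) + b * d * e - a * (e * e) - c * (d * d) - b * b * g = 0 ->
  a * a + b * b + c * c != 0 -> b * b - 4 * (a * c) = 0 -> a = 0 ->
  can_reach conic_program (outputs_Vaff a b c d e g) (MState 94 reg [::]).
Proof.
move=> rg re rc r99 det0 quad_neq0 disc0 a0; subst g e c.
have cn : reg 5 != 0.
  move: quad_neq0 disc0; rewrite a0 !mul0r mulr0 !add0r subr0 => quad_neq0 /eqP.
  by rewrite mulf_eq0 orbb => /eqP b0; apply: contraNneq quad_neq0 => ->; rewrite b0 !mulr0 addr0.
do 4 exec_step.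
eapply can_reach_roots2; [reflexivity | reflexivity | |move=> rs _ rsE].
  by apply: poly_of_regs2_neq0; rewrite /upd /= r99 addr0.
have {}rsE x : (x \in rs) = (reg 5 * x ^+ 2 + reg 4 * x + reg 3 == 0).
  by rewrite rsE /root horner_poly_of_regs2 /upd /= r99 !addr0; congr (_ == _); ring.
have outE := Vaff_output_parallel_y det0 quad_neq0 disc0 a0 rsE.
case: rs rsE outE => [|u1 [|u2 []]] // rsE outE.
- branch_eq k0; last by absurd_branch k0.
  by apply: can_reach_here; split => //=; rewrite r99.
- branch_eq k0; first by absurd_branch k0.
  exec_step; branch_eq k1; last by absurd_branch k1.
  by do 6 exec_step; apply: can_reach_here; split => //=; rewrite r99.
- branch_eq k0; first by absurd_branch k0.
  exec_step; branch_eq k1; first by absurd_branch k1.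
  by do 11 exec_step; apply: can_reach_here; split => //=; rewrite r99.
Qed.

Lemma run_conic_program a b c d e g :
  can_reach conic_program (outputs_Vaff a b c d e g)
    (MState 0 (fun i => nth 0 [:: a; d; b; g; e; c] i) [::]).
Proof.
do 16 exec_step; branch_eq det0; last first.
  by exec_step; apply: can_reach_here; split => //=; exact: Vaff_output_det_neq0.
do 4 exec_step; branch_eq quad0.
  exec_step; branch_eq lin0.
    branch_eq g0.
      by do 8 exec_step; apply: can_reach_here; split => //=; exact: Vaff_output_plane.
    by exec_step; apply: can_reach_here; split => //=; exact: Vaff_output_empty.
  by do 10 exec_step; apply: can_reach_here; split => //=; exact: Vaff_output_line.
do 3 exec_step; branch_eq disc0; last first.
  branch_lt neg.
    by do 13 exec_step; apply: can_reach_here; split => //=; exact: Vaff_output_point.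
  by exec_step; apply: can_reach_here; split => //=; exact: Vaff_output_hyperbolic.
by branch_eq a0; [apply: run_parallel_y | apply: run_parallel_x].
Qed.

End Algorithm.

Lemma zeroset_conic (R : realType) (f0 f1 f2 : {poly R}) :
  (size f0 <= 1)%N -> (size f1 <= 2)%N -> (size f2 <= 3)%N ->
  zeroset f0 f1 f2 = [set z | conic f0`_0 f1`_1 f2`_2 f1`_0 f2`_1 f2`_0 z = 0].
Proof.
move=> s0 s1 s2; have fE z : feval f0 f1 f2 z = conic f0`_0 f1`_1 f2`_2 f1`_0 f2`_1 f2`_0 z.
  rewrite /feval (horner_coef_wide _ s0) (horner_coef_wide _ s1) (horner_coef_wide _ s2).
  by rewrite !big_ord_recr !big_ord0 /conic /=; ring.
by apply/seteqP; split => z; rewrite /zeroset /= fE.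
Qed.

Theorem lemma4p9 (R : realType) : exists P : program R, computes_Vaff P.
Proof.
exists (conic_program R) => f0 f1 f2 s0 s1 s2.
have [t rt [ht ot]] := run_conic_program f0`_0 f1`_1 f2`_2 f1`_0 f2`_1 f2`_0.
split=> [|s rs hs]; first by exists t.
by rewrite (reach_halted_unique rs hs rt ht) ot zeroset_conic.
Qed.
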